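(* Let $T$ be a string of length $n$ and $1\le i\le j<n$. For each $[s,t]\in\mathsf{MUS}(T[i..j+1])$ with $t\ne j+1$, if $[s,t]\notin\mathsf{MUS}(T[i..j])$ then $\#\mathit{occ}_{T[i..j+1]}(\mathit{sqs}_{i,j+1})=2$ and $\mathit{sqs}_{i,j+1}$ is a proper substring of $T[s..t]$.
   Context: $T[a..b]$ denotes the substring of $T$ from position $a$ to $b$. For strings $S,w$, $\#\mathit{occ}_S(w)$ is the number of positions at which $w$ occurs in $S$, with $\#\mathit{occ}_S(\varepsilon)=|S|+1$. A substring $w$ of $S$ is unique in $S$ if $\#\mathit{occ}_S(w)=1$ and repeating if $\#\mathit{occ}_S(w)\ge 2$. For $1\le i\le j\le n$, $\mathsf{MUS}(T[i..j])$ is the set of intervals $[s,t]$ (positions in $T$) with $i\le s\le t\le j$ such that $T[s..t]$ is unique in $T[i..j]$ and every proper substring of $T[s..t]$ (including the empty string) is repeating in $T[i..j]$. $\mathit{sqs}_{i,j}$ is the shortest suffix of $T[i..j]$ that occurs at most twice in $T[i..j]$. *)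

From mathcomp Require Import all_boot.
Set Implicit Arguments. Unset Strict Implicit. Unset Printing Implicit Defensive.

(* T[a..b], with 1-based positions a, b (empty if b < a). *)
Definition substr (A : eqType) (T : seq A) (a b : nat) : seq A :=
  take (b.+1 - a) (drop a.-1 T).

(* #occ_S(w): number of positions p (0-based, 0 <= p <= |S|-|w|) at which w
   occurs in S; for w = [::] this is |S|+1. *)
Definition occ (A : eqType) (S w : seq A) : nat :=
  count (fun p => take (size w) (drop p S) == w) (iota 0 (size S - size w).+1).

Definition is_MUS (A : eqType) (T : seq A) (i j s t : nat) : Prop :=
  [/\ i <= s, s <= t, t <= j,
      occ (substr T i j) (substr T s t) = 1 &
      forall w : seq A, infix w (substr T s t) -> w != substr T s t ->
        2 <= occ (substr T i j) w].

(* sqs_{i,j}: the shortest suffix of S = T[i..j] occurring at most twice in S.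
   l is the least length l <= |S| such that the suffix of length l occurs at
   most twice (S itself occurs once, so such l exists). *)
Definition sqs_of (A : eqType) (S : seq A) : seq A :=
  let l := find (fun l => occ S (drop (size S - l) S) <= 2) (iota 0 (size S).+1) in
  drop (size S - l) S.

Definition sqs (A : eqType) (T : seq A) (i j : nat) : seq A := sqs_of (substr T i j).

From mathcomp Require Import all_boot zify.

(* Let S = T[i..j], so that T[i..j+1] = S c, and let u = T[s..t], a factor of S
   since t <= j.  Appending the letter c creates at most one new occurrence of a
   word, and only when the word becomes a suffix of S c.  Hence u is still
   unique in S, and [s,t] can fail to be a MUS of S only because some proper
   factor w of u occurs at most once in S but at least twice in S c: then w is
   a suffix of S c occurring exactly twice.  So sqs_{i,j+1} is a suffix of w,
   hence a proper factor of u, and it occurs at least as often as w, i.e.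
   exactly twice. *)

Section Occurrences.
Context {A : eqType}.
Implicit Types S w x y : seq A.

(* The guard [p <= size S] only matters for the empty word, which is a prefix
   of [drop p S] for every [p]. *)
Definition occurs_at S w p := (p <= size S) && prefix w (drop p S).

Lemma size_prefix x y : prefix x y -> size x <= size y.
Proof. by move=> /prefixP[z ->]; rewrite size_cat leq_addr. Qed.

Lemma occE S w N : size S < N -> occ S w = count (occurs_at S w) (iota 0 N).
Proof.
move=> lt_SN; rewrite /occ; set K := (size S - size w).+1.
have le_KN : K <= N by rewrite /K; lia.
rewrite -(subnKC le_KN) iotaD count_cat add0n.
have -> : count (occurs_at S w) (iota K (N - K)) = 0.
  apply/eqP; rewrite -leqn0 leqNgt -has_count; apply/hasPn => p.
  rewrite mem_iota /occurs_at /K => /andP[le_Kp _].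
  apply/negP => /andP[le_pS /size_prefix]; rewrite size_drop; lia.
rewrite addn0; apply: eq_in_count => p; rewrite mem_iota /occurs_at /K prefixE.
by move=> /andP[_ lt_pK]; rewrite (_ : p <= size S) //; lia.
Qed.

Lemma occ_self S : occ S S = 1.
Proof. by rewrite /occ subnn /= drop0 take_size eqxx. Qed.

Lemma occ_infix S x y : infix x y -> occ S y <= occ S x.
Proof.
move=> /infixP[a [b ->]].
rewrite (@occE S (a ++ x ++ b) _ (ltnSn _)) (@occE S x (size a + (size S).+1)); last lia.
rewrite iotaD count_cat add0n -[size a]addn0 iotaDl addn0 count_map.
apply: leq_trans (leq_addl _ _); apply: sub_count => p /andP[le_pS /prefixP[z Ez]] /=.
have le_apS : size a + p <= size S.
  by have := congr1 size Ez; rewrite size_drop !size_cat; lia.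
by rewrite /occurs_at le_apS -drop_drop Ez -!catA drop_size_cat // prefix_prefix.
Qed.

Lemma occ_infix_pos {S x} : infix x S -> 0 < occ S x.
Proof. by move=> x_in_S; rewrite -(occ_self S) occ_infix. Qed.

Lemma occ_rcons S c w : occ (rcons S c) w = occ S w + suffix w (rcons S c).
Proof.
rewrite /occ suffixE size_rcons.
have [le_wS | lt_Sw] := leqP (size w) (size S).
  rewrite subSn // -addn1 iotaD count_cat add0n; congr (_ + _).
    apply: eq_in_count => p; rewrite mem_iota => /andP[_ lt_p].
    by rewrite drop_rcons -?cats1 ?takel_cat ?size_drop //; lia.
  rewrite /= take_oversize; first by case: eqP.
  by rewrite size_drop size_rcons; lia.
have -> : size S - size w = 0 by lia.
have -> : (size S).+1 - size w = 0 by lia.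
rewrite /= !drop0 !take_oversize ?size_rcons //; last lia.
have /negPf -> : S != w by apply: contraTneq lt_Sw => ->; rewrite ltnn.
by rewrite addn0.
Qed.

Lemma occ_rcons_reaches2 {S c w} :
  occ S w < 2 -> 2 <= occ (rcons S c) w -> occ (rcons S c) w = 2 /\ suffix w (rcons S c).
Proof. by rewrite occ_rcons; case: suffix => /=; lia. Qed.

Lemma has_sqs_length S :
  has (fun l => occ S (drop (size S - l) S) <= 2) (iota 0 (size S).+1).
Proof.
apply/hasP; exists (size S); first by rewrite mem_iota /= ltnSn.
by rewrite subnn drop0 occ_self.
Qed.

Lemma occ_sqs_of S : occ S (sqs_of S) <= 2.
Proof.
have lt_find := has_sqs_length S; rewrite has_find size_iota in lt_find.
by have := nth_find 0 (has_sqs_length S); rewrite nth_iota.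
Qed.

Lemma suffix_sqs_of {S w} : suffix w S -> occ S w <= 2 -> suffix (sqs_of S) w.
Proof.
rewrite suffixE => /eqP Ew occ_w.
have le_wS : size w <= size S by rewrite -{1}Ew size_drop leq_subr.
rewrite /sqs_of; set l := find _ _.
have le_lw : l <= size w.
  rewrite leqNgt; apply/negP => /(before_find 0).
  by rewrite nth_iota ?add0n ?Ew ?occ_w.
suff -> : drop (size S - l) S = drop (size w - l) w by apply: suffix_drop.
by rewrite -{2}Ew drop_drop; congr drop; lia.
Qed.

Lemma sqs_of_occ2 {S w} :
  suffix w S -> occ S w = 2 -> occ S (sqs_of S) = 2 /\ suffix (sqs_of S) w.
Proof.
move=> suf_w occ_w; have suf_sqs := suffix_sqs_of suf_w (eq_leq occ_w).
split=> //; apply/eqP; rewrite eqn_leq occ_sqs_of -{1}occ_w.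
exact/occ_infix/suffixW.
Qed.

Lemma sqs_of_rcons_proper_infix {S c u w} :
  infix w u -> w != u -> occ S w < 2 -> 2 <= occ (rcons S c) w ->
  [&& occ (rcons S c) (sqs_of (rcons S c)) == 2,
      infix (sqs_of (rcons S c)) u & sqs_of (rcons S c) != u].
Proof.
move=> w_in_u w_ne_u occ_S_w occ_Sc_w.
have [occ_w suf_w] := occ_rcons_reaches2 occ_S_w occ_Sc_w.
have [-> suf_sqs] := sqs_of_occ2 suf_w occ_w.
rewrite eqxx (suffix_infix_trans suf_sqs w_in_u) /=.
apply: contra_neq w_ne_u => sqs_u; apply: subseq_anti.
by rewrite infixW //= infixW // -sqs_u suffixW.
Qed.

End Occurrences.

Section Substrings.
Context {A : eqType} (T : seq A).

Lemma substr_cat i k j :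
  1 <= i -> i <= k.+1 -> k <= j -> substr T i j = substr T i k ++ substr T k.+1 j.
Proof.
move=> i_pos le_ik le_kj; rewrite /substr /=.
rewrite (_ : drop k T = drop (k.+1 - i) (drop i.-1 T)) -?takeD ?drop_drop.
  by congr take; lia.
by congr drop; lia.
Qed.

Lemma substr_rcons {i j} :
  1 <= i -> i <= j.+1 -> j < size T -> exists c, substr T i j.+1 = rcons (substr T i j) c.
Proof.
move=> i_pos le_ij lt_jT; rewrite (@substr_cat i j) ?leqnSn //.
have : size (substr T j.+1 j.+1) = 1 by rewrite size_take size_drop; case: ifP; lia.
by case: (substr T j.+1 j.+1) => [|c []] // _; exists c; rewrite cats1.
Qed.

Lemma substr_infix i j s t :
  1 <= i -> i <= s -> s <= t -> t <= j -> infix (substr T s t) (substr T i j).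
Proof.
move=> i_pos le_is le_st le_tj.
rewrite (@substr_cat i s.-1 j) ?prednK ?(@substr_cat s t j) //; try lia.
exact/infix_catl/prefix_infix.
Qed.

End Substrings.

Theorem lemma5 (A : eqType) (T : seq A) (n i j s t : nat) :
  size T = n -> 1 <= i -> i <= j -> j < n ->
  is_MUS T i j.+1 s t -> t != j.+1 -> ~ is_MUS T i j s t ->
  occ (substr T i j.+1) (sqs T i j.+1) = 2 /\
  (infix (sqs T i j.+1) (substr T s t) /\ sqs T i j.+1 != substr T s t).
Proof.
move=> <- i_pos le_ij lt_jT [le_is le_st le_tj1 occ_u u_minimal] /eqP ne_tj not_MUS.
have le_tj : t <= j by lia.
have [c S'E] := substr_rcons T i_pos (leqW le_ij) lt_jT.
rewrite /sqs S'E in occ_u u_minimal *.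
set S := substr T i j in occ_u u_minimal *.
set u := substr T s t in occ_u u_minimal *.
have u_in_S : infix u S by exact: substr_infix.
have occ_S_u : occ S u = 1.
  by have := occ_rcons S c u; have := occ_infix_pos u_in_S; lia.
(* Argue by contradiction on the decidable conclusion: this avoids extracting,
   classically, a proper factor of u witnessing that [s,t] is not a MUS of S. *)
case: (boolP [&& occ (rcons S c) (sqs_of (rcons S c)) == 2,
                infix (sqs_of (rcons S c)) u & sqs_of (rcons S c) != u]).
  by case/and3P => /eqP.
move=> concl_fails; exfalso; apply: not_MUS; split=> // w w_in_u w_ne_u.
rewrite leqNgt; apply: contra concl_fails => occ_S_w.
exact: sqs_of_rcons_proper_infix occ_S_w (u_minimal w w_in_u w_ne_u).
Qed.
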